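(* Let $n\geq1$ and $k\in\{1,\ldots,n\}$, and let $\eta_k\in\Omega$ be the sequence constructed below. Then $v_{n,\eta_k}=(0,k)$ or $v_{n,\eta_k}=(n-k+1,0)$.
   Context: $\Omega$ is the set of sequences $\eta=(z,d_0,\ldots,d_r)$ with $z\in\{0,1\}$, $d_0=0$, $d_i\geq1$ ($1\leq i\leq r$), $\sum d_i=n$. For $j\in\{1,\ldots,n\}$ let $t$ be unique with $\sum_{i=0}^{t-1}d_i<j\leq\sum_{i=0}^td_i$, $c=j-\sum_{i=0}^{t-1}d_i$; $v_{j,\eta}=(\sum_{i\text{ odd},i<t}d_i+c,0)$ if $z=1,t$ odd; $(0,\sum_{i\text{ even},i<t}d_i+c)$ if $z=1,t$ even; $(0,\sum_{i\text{ odd},i<t}d_i+c)$ if $z=0,t$ odd; $(\sum_{i\text{ even},i<t}d_i+c,0)$ if $z=0,t$ even. Construction of $\eta_k$: let $f_k(v)=kv_1+(1-k)v_2$ for $v\in\mathbb N^2$ (so $f_k((1,0))=k$, $f_k((n,n+1))=n+1-k$). Put $z_k=1$ if $k\leq n+1-k$ and $z_k=0$ otherwise, and $d_{k,0}=0$. Iteratively for $l\geq1$, with $O_l=\sum_{j\text{ odd},1\leq j\leq l-1}d_{k,j}$ and $E_l=\sum_{j\text{ even},0\leq j\leq l-1}d_{k,j}$, define $t_l=\max\{m\in\mathbb N: mk\leq(E_l+1)(n+1-k)\}$ if $z_k=1,l$ odd; $t_l=\max\{m: m(n+1-k)\leq(O_l+1)k\}$ if $z_k=1,l$ even; $t_l=\max\{m:m(n+1-k)\leq(E_l+1)k\}$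 if $z_k=0,l$ odd; $t_l=\max\{m:mk\leq(O_l+1)(n+1-k)\}$ if $z_k=0,l$ even; $s_1=0$, $s_l=O_l$ for odd $l>1$, $s_l=E_l$ for even $l$; and $d_{k,l}=\min\{n-\sum_{j=0}^{l-1}d_{k,j},\,t_l-s_l\}$. The process stops at the first $r$ with $\sum_{j=1}^rd_{k,j}=n$, and $\eta_k=(z_k,d_{k,0},\ldots,d_{k,r})$ (it lies in $\Omega$). *)

From mathcomp Require Import all_boot.
Set Implicit Arguments. Unset Strict Implicit. Unset Printing Implicit Defensive.

(* Sequences eta = (z, d_0, ..., d_r) are represented by a boolean z
   (true <-> z = 1) and the list ds = [:: d_0; ...; d_r]. *)

Definition in_Omega (n : nat) (z : bool) (ds : seq nat) : Prop :=
  exists r, size ds = r.+1 /\ nth 0 ds 0 = 0 /\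
    (forall i, 1 <= i <= r -> 1 <= nth 0 ds i) /\ sumn ds = n.

(* The vector v_{j,eta}. t is the (unique, for eta in Omega) index with
   sum_{i<t} d_i < j <= sum_{i<=t} d_i; we take the least t with
   j <= sum_{i<=t} d_i. *)
Definition v_vec (z : bool) (ds : seq nat) (j : nat) : nat * nat :=
  let t := find (fun t => j <= \sum_(0 <= i < t.+1) nth 0 ds i) (iota 0 (size ds)) in
  let c := j - \sum_(0 <= i < t) nth 0 ds i in
  let So := \sum_(0 <= i < t | odd i) nth 0 ds i in
  let Se := \sum_(0 <= i < t | ~~ odd i) nth 0 ds i in
  if z then (if odd t then (So + c, 0) else (0, Se + c))
  else (if odd t then (0, So + c) else (Se + c, 0)).

(* max {m in N : m * a <= b} for a > 0 is b %/ a. *)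
Definition tmax (a b : nat) : nat := b %/ a.

Definition zk (n k : nat) : bool := k <= n.+1 - k.

(* Given ds = [:: d_{k,0}; ...; d_{k,l-1}] (size l >= 1), compute d_{k,l}. *)
Definition next_d (n k : nat) (ds : seq nat) : nat :=
  let l := size ds in
  let O := \sum_(1 <= j < l | odd j) nth 0 ds j in
  let E := \sum_(0 <= j < l | ~~ odd j) nth 0 ds j in
  let t := if zk n k then
             (if odd l then tmax k ((E + 1) * (n.+1 - k))
              else tmax (n.+1 - k) ((O + 1) * k))
           else
             (if odd l then tmax (n.+1 - k) ((E + 1) * k)
              else tmax k ((O + 1) * (n.+1 - k))) in
  let s := if l == 1 then 0 else if odd l then O else E in
  minn (n - sumn ds) (t - s).

Fixpoint dlist (n k l : nat) : seq nat :=
  match l with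
  | 0 => [:: 0]
  | l'.+1 => let ds := dlist n k l' in rcons ds (next_d n k ds)
  end.

Definition stops_at (n k r : nat) : Prop :=
  1 <= r /\ sumn (dlist n k r) = n /\
  (forall r', 1 <= r' < r -> sumn (dlist n k r') != n).

Definition eta_z (n k : nat) : bool := zk n k.
Definition eta_ds (n k r : nat) : seq nat := dlist n k r.

From mathcomp Require Import all_boot zify.
Set Implicit Arguments. Unset Strict Implicit.

(* Let O and E be the sums of the odd- and even-indexed d_{k,j}, and let p, q be
   n+1-k and k (swapped when z_k = 0), so that p + q = n + 1 and q <= p.  The
   construction alternately sets O := floor((E+1) p / q) and E := floor((O+1) q / p);
   the cap n - sum d is never active.  With a the coordinate about to move (weight p)
   and b the other one (weight q), the invariant is b < q and (a+1)/p <= (b+1)/q.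
   Each step strictly increases a and either restores the invariant with the roles
   exchanged, or (when b = q - 1) lands on a = p, so that O + E = p + q - 1 = n and
   the process stops.  The last position n lies in the last block, hence
   v_{n,eta_k} carries the whole sum of that block's parity class, namely p or q,
   in the coordinate prescribed by z_k. *)

Definition balanced (p q a b : nat) := b < q /\ a.+1 * q <= b.+1 * p.

Definition settled (p q a b : nat) := a.+1 = p /\ b = q.

Lemma balanced_sum p q a b : balanced p q a b -> a + b < (p + q).-1.
Proof.
case=> lt_bq le_ab; have q_gt0 : 0 < q by apply: leq_ltn_trans lt_bq.
have : a.+1 * q <= p * q by rewrite (leq_trans le_ab) // mulnC leq_mul2l lt_bq orbT.
by rewrite leq_pmul2r //; lia.
Qed.

Lemma balanced_next p q a b : balanced p q a b ->
  let a' := b.+1 * p %/ q in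
  [/\ a < a', a' + b <= (p + q).-1 & settled q p b a' \/ balanced q p b a'].
Proof.
case=> lt_bq le_ab /=; have q_gt0 : 0 < q by apply: leq_ltn_trans lt_bq.
have p_gt0 : 0 < p.
  by rewrite lt0n; apply: contraTneq le_ab => ->; rewrite muln0 -ltnNge muln_gt0.
have lt_a : a < b.+1 * p %/ q by rewrite leq_divRL.
case: (leqP q b.+1) => [le_qb | lt_b1q].
  have eq_b1q : b.+1 = q by apply/eqP; rewrite eqn_leq lt_bq.
  rewrite eq_b1q mulKn // in lt_a *; split => //; [lia | by left].
have lt_a'p : b.+1 * p %/ q < p by rewrite ltn_divLR // mulnC ltn_pmul2l.
split => //; [lia | right; split => //].
exact/ltnW/ltn_ceil.
Qed.

Definition class_sum (b : bool) (ds : seq nat) :=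
  \sum_(0 <= j < size ds | odd j == b) nth 0 ds j.

Lemma class_sum_rcons b ds d :
  class_sum b (rcons ds d) = class_sum b ds + (if odd (size ds) == b then d else 0).
Proof.
rewrite /class_sum size_rcons big_mkcond big_nat_recr //= nth_rcons ltnn eqxx.
congr (_ + _); rewrite [RHS]big_mkcond; apply: eq_big_nat => j /andP[_ lt_j].
by rewrite nth_rcons lt_j.
Qed.

Lemma sumn_class_sum b ds : sumn ds = class_sum b ds + class_sum (~~ b) ds.
Proof.
elim/last_ind: ds => [|ds d IH]; first by rewrite /class_sum !big_geq.
by rewrite sumn_rcons !class_sum_rcons {}IH; case: b; case: odd => /=; lia.
Qed.

Lemma class_sum_odd ds : class_sum true ds = \sum_(1 <= j < size ds | odd j) nth 0 ds j.
Proof.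
case: ds => [|d ds]; first by rewrite /class_sum !big_geq.
by rewrite /class_sum big_ltn_cond //=; apply: eq_bigl => j; rewrite eqb_id.
Qed.

Lemma class_sum_even ds : class_sum false ds = \sum_(0 <= j < size ds | ~~ odd j) nth 0 ds j.
Proof. by apply: eq_bigl => j; rewrite eqbF_neg. Qed.

Definition next_sum (ds : seq nat) := class_sum (odd (size ds)) ds.
Definition last_sum (ds : seq nat) := class_sum (~~ odd (size ds)) ds.

Lemma next_sum_rcons ds d : next_sum (rcons ds d) = last_sum ds.
Proof.
by rewrite /next_sum /last_sum size_rcons /= class_sum_rcons; case: (odd _); rewrite addn0.
Qed.

Lemma last_sum_rcons ds d : last_sum (rcons ds d) = next_sum ds + d.
Proof. by rewrite /next_sum /last_sum size_rcons /= negbK class_sum_rcons eqxx. Qed.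

Lemma sumn_next_last ds : sumn ds = next_sum ds + last_sum ds.
Proof. exact: sumn_class_sum. Qed.

Definition weight (n k : nat) (b : bool) := if b == zk n k then n.+1 - k else k.

Lemma weight_sum n k b : k <= n.+1 -> weight n k b + weight n k (~~ b) = n.+1.
Proof. by rewrite /weight; case: b; case: zk => /=; lia. Qed.

Lemma next_dE n k ds :
  next_d n k ds = minn (n - sumn ds)
    ((last_sum ds).+1 * weight n k (odd (size ds)) %/ weight n k (~~ odd (size ds))
     - next_sum ds).
Proof.
rewrite /next_d /tmax /next_sum /last_sum /weight -class_sum_odd -class_sum_even.
have -> : (if size ds == 1 then 0 else if odd (size ds) then class_sum true ds
            else class_sum false ds) = class_sum (odd (size ds)) ds.
  case: eqP => [size1 | _]; last by case: (odd _).
  by rewrite /class_sum size1 big_mkcond big_nat1.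
by case: (odd _); case: zk; rewrite /= addn1.
Qed.

Lemma v_vec_rcons_sumn z s d : 0 < d ->
  v_vec z (rcons s d) (sumn (rcons s d)) =
  if z == odd (size s) then (class_sum (odd (size s)) (rcons s d), 0)
  else (0, class_sum (odd (size s)) (rcons s d)).
Proof.
move=> d_gt0; set ds := rcons s d.
have sum_prefix P t : t <= size s ->
    \sum_(0 <= i < t | P i) nth 0 ds i = \sum_(0 <= i < t | P i) nth 0 s i.
  move=> le_ts; rewrite big_mkcond [RHS]big_mkcond; apply: eq_big_nat => i /andP[_ lt_it].
  by rewrite nth_rcons (leq_trans lt_it le_ts).
have sum_s : \sum_(0 <= i < size s) nth 0 s i = sumn s.
  by rewrite sumnE [RHS](big_nth 0).
have sum_ds : sumn ds = sumn s + d by rewrite sumn_rcons.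
have last_block : find (fun t => sumn ds <= \sum_(0 <= i < t.+1) nth 0 ds i)
                       (iota 0 (size ds)) = size s.
  rewrite size_rcons -addn1 iotaD find_cat size_iota.
  have -> : has (fun t => sumn ds <= \sum_(0 <= i < t.+1) nth 0 ds i)
                (iota 0 (size s)) = false.
    apply/hasPn => t; rewrite mem_iota add0n /= => lt_ts.
    rewrite -ltnNge sum_prefix // sum_ds -sum_s.
    by rewrite [X in _ < X + _](@big_cat_nat _ _ _ t.+1) //=; lia.
  by rewrite /= big_nat_recr //= sum_prefix // sum_s sum_ds nth_rcons ltnn eqxx leqnn addn0.
rewrite /v_vec /= last_block !sum_prefix // sum_s sum_ds addKn class_sum_rcons eqxx.
have -> : \sum_(0 <= i < size s | odd i) nth 0 s i = class_sum true s.
  by apply: eq_bigl => i; rewrite eqb_id.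
by rewrite -class_sum_even; case: z; case: (odd _).
Qed.

Section Dynamics.

Variables n k : nat.

Definition next_weight (ds : seq nat) := weight n k (odd (size ds)).
Definition last_weight (ds : seq nat) := weight n k (~~ odd (size ds)).

Definition balanced_at (ds : seq nat) :=
  balanced (next_weight ds) (last_weight ds) (next_sum ds) (last_sum ds).
Definition settled_at (ds : seq nat) :=
  settled (next_weight ds) (last_weight ds) (next_sum ds) (last_sum ds).

Lemma next_weight_rcons ds d : next_weight (rcons ds d) = last_weight ds.
Proof. by rewrite /next_weight size_rcons. Qed.

Lemma last_weight_rcons ds d : last_weight (rcons ds d) = next_weight ds.
Proof. by rewrite /last_weight size_rcons /= negbK. Qed.

Hypothesis k_le_n : k <= n.

Lemma next_last_weight ds : next_weight ds + last_weight ds = n.+1.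
Proof. exact/weight_sum/leqW. Qed.

Lemma balanced_at_sumn ds : balanced_at ds -> sumn ds < n.
Proof. by move/balanced_sum; rewrite sumn_next_last next_last_weight. Qed.

Lemma settled_at_sumn ds : settled_at ds -> sumn ds = n.
Proof. by case; rewrite sumn_next_last; have := next_last_weight ds; lia. Qed.

Lemma balanced_at_step ds (d := next_d n k ds) : balanced_at ds ->
  0 < d /\ (settled_at (rcons ds d) \/ balanced_at (rcons ds d)).
Proof.
rewrite /settled_at /balanced_at next_weight_rcons last_weight_rcons.
rewrite next_sum_rcons last_sum_rcons => bal.
have [lt_a cap fin] := balanced_next bal.
have -> : d = (last_sum ds).+1 * next_weight ds %/ last_weight ds - next_sum ds.
  rewrite /d next_dE -/(next_weight ds) -/(last_weight ds); apply/minn_idPr.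
  by rewrite sumn_next_last; have := next_last_weight ds; lia.
by rewrite subnKC ?subn_gt0 // ltnW.
Qed.

Lemma dlist_settles r : balanced_at (dlist n k r) ->
  exists2 R, r <= R & [/\ 0 < next_d n k (dlist n k R), settled_at (dlist n k R.+1)
                        & forall i, r <= i <= R -> balanced_at (dlist n k i)].
Proof.
have [m] := ubnP (n - sumn (dlist n k r)); elim: m r => // m IH r lt_m bal.
have [d_gt0 [fin | bal']] := balanced_at_step bal.
  by exists r => //; split => // i; rewrite -eqn_leq => /eqP <-.
have [|R le_rR [dR fin mid]] := IH r.+1 _ bal'.
  by rewrite /= sumn_rcons; have := balanced_at_sumn bal; lia.
exists R; [exact: ltnW | split => // i /andP[le_ri le_iR]].
have [lt_ri | le_ir] := ltnP r i; first by apply: mid; rewrite lt_ri.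
by have -> : i = r by apply/eqP; rewrite eqn_leq le_ir.
Qed.

End Dynamics.

Theorem proposition3p8 (n k : nat) (hn : 1 <= n) (hk1 : 1 <= k) (hkn : k <= n) :
  exists r : nat, stops_at n k r /\
    (v_vec (eta_z n k) (eta_ds n k r) n = (0, k) \/
     v_vec (eta_z n k) (eta_ds n k r) n = (n - k + 1, 0)).
Proof.
have bal0 : balanced_at n k (dlist n k 0).
  have cs0 b : class_sum b [:: 0] = 0 by rewrite /class_sum big_mkcond big_nat1; case: b.
  rewrite /balanced_at /next_sum /last_sum !cs0 /next_weight /last_weight /weight /zk.
  by case: leqP => /= ?; split; lia.
have [R _ [d_gt0 fin mid]] := dlist_settles hkn bal0.
have sumR : sumn (dlist n k R.+1) = n by exact: settled_at_sumn fin.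
exists R.+1; split.
  split=> //; split=> // i /andP[_ le_iR].
  by rewrite neq_ltn (balanced_at_sumn hkn (mid i le_iR)).
rewrite /eta_z /eta_ds -[X in v_vec _ _ X]sumR /= v_vec_rcons_sumn //.
case: fin => _; rewrite /last_sum /last_weight size_rcons /= negbK => ->.
rewrite /weight eq_sym; case: eqP => _; [right | left] => //.
by rewrite addn1 subSn.
Qed.
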